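(* Let $\Lambda$ be a row-finite $k$-graph with no sources, $R$ a commutative ring with $1$, and $m\in\mathbb{N}^k$. Then the family $\{s_\alpha s_{\beta^*}: \alpha,\beta\in\Lambda,\ s(\alpha)=s(\beta),\ d(\beta)=m\}$ (indexed by the pairs $(\alpha,\beta)$) is linearly independent over $R$ in $\mathrm{KP}_R(\Lambda)$. (In particular, for $m=0$, $\{s_\alpha:\alpha\in\Lambda\}$ is linearly independent.)
   Context: A $k$-graph is a countable category $\Lambda$ with a functor $d:\Lambda\to\mathbb{N}^k$ ($\mathbb{N}^k$ a one-object category under addition) with unique factorization: whenever $d(\lambda)=m+n$ there are unique $\mu,\nu$ with $d(\mu)=m,d(\nu)=n,\lambda=\mu\nu$. $\Lambda^0$ = vertices (degree-$0$ morphisms), $\Lambda^n=d^{-1}(n)$, $r,s$ range and source, $\lambda\mu$ defined when $s(\lambda)=r(\mu)$, $v\Lambda^n=\{\lambda\in\Lambda^n:r(\lambda)=v\}$. Row-finite: $v\Lambda^n$ finite; no sources: $v\Lambda^n\ne\emptyset$. Kumjian-Pask $\Lambda$-family in an $R$-algebra $A$: $P:\Lambda^0\to A$, $S:\Lambda^{\ne0}\cup\{\lambda^*:\lambda\in\Lambda^{\neq0}\}\to A$ (with $\Lambda^{\neq0}$ the paths of nonzero degree) such that (KP1) $P_v$ are mutually orthogonal idempotents; (KP2) for $r(\mu)=s(\lambda)$: $S_\lambda S_\mu=S_{\lambda\mu}$, $S_{\mu^*}S_{\lambda^*}=S_{(\lambda\mu)^*}$, $P_{r(\lambda)}S_\lambda=S_\lambda=S_\lambda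 P_{s(\lambda)}$, $P_{s(\lambda)}S_{\lambda^*}=S_{\lambda^*}=S_{\lambda^*}P_{r(\lambda)}$; (KP3) $S_{\lambda^*}S_\mu=\delta_{\lambda,\mu}P_{s(\lambda)}$ when $d(\lambda)=d(\mu)$; (KP4) $P_v=\sum_{\lambda\in v\Lambda^n}S_\lambda S_{\lambda^*}$ for $n\ne0$. $\mathrm{KP}_R(\Lambda)$ is the $R$-algebra generated by a universal such family $(p,s)$. Convention: for a vertex $v$, $s_v$ and $s_{v^*}$ both mean $p_v$. *)

From mathcomp Require Import all_boot all_order all_algebra.
Set Implicit Arguments. Unset Strict Implicit. Unset Printing Implicit Defensive.
Import GRing.Theory.
Local Open Scope ring_scope.

Definition deg_t (k : nat) := {ffun 'I_k -> nat}.
Definition dzero (k : nat) : deg_t k := [ffun _ => 0%N].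
Definition dadd (k : nat) (m n : deg_t k) : deg_t k := [ffun i => (m i + n i)%N].

(* Composition kcomp l m is
   "l m" (first m, then l), meaningful when ks l = kr m. *)
Record kgraph (k : nat) := KGraph {
  kV : countType;
  kP : countType;
  kr : kP -> kV;
  ks : kP -> kV;
  kid : kV -> kP;
  kcomp : kP -> kP -> kP;
  kd : kP -> deg_t k;
  kr_id : forall v, kr (kid v) = v;
  ks_id : forall v, ks (kid v) = v;
  kr_comp : forall l m, ks l = kr m -> kr (kcomp l m) = kr l;
  ks_comp : forall l m, ks l = kr m -> ks (kcomp l m) = ks m;
  kcomp_idl : forall l, kcomp (kid (kr l)) l = l;
  kcomp_idr : forall l, kcomp l (kid (ks l)) = l;
  kcompA : forall l m n, ks l = kr m -> ks m = kr n ->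
     kcomp (kcomp l m) n = kcomp l (kcomp m n);
  kd_id : forall v, kd (kid v) = dzero k;
  kd_comp : forall l m, ks l = kr m -> kd (kcomp l m) = dadd (kd l) (kd m);
  kfactor : forall l (m n : deg_t k), kd l = dadd m n ->
     exists mu, exists nu,
       [/\ kd mu = m, kd nu = n, ks mu = kr nu & l = kcomp mu nu] /\
       (forall mu' nu', kd mu' = m -> kd nu' = n -> ks mu' = kr nu' ->
          l = kcomp mu' nu' -> mu' = mu /\ nu' = nu)
}.

Definition row_finite k (L : kgraph k) : Prop :=
  forall (v : kV L) (n : deg_t k), exists s : seq (kP L),
    forall l : kP L, kr l = v -> kd l = n -> l \in s.

Definition no_sources k (L : kgraph k) : Prop :=
  forall (v : kV L) (n : deg_t k), exists l : kP L, kr l = v /\ kd l = n.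

Record nalg_mul (R : comPzRingType) (A : lmodType R) := NAlgMul {
  amul :> A -> A -> A;
  amulA : forall x y z, amul x (amul y z) = amul (amul x y) z;
  amulDl : forall x y z, amul (x + y) z = amul x z + amul y z;
  amulDr : forall x y z, amul x (y + z) = amul x y + amul x z;
  amulZl : forall (r : R) x y, amul (r *: x) y = r *: amul x y;
  amulZr : forall (r : R) x y, amul x (r *: y) = r *: amul x y
}.

(* ---------- Kumjian-Pask families ----------
   p : vertices -> A ; s, st : paths -> A give S_lambda and S_{lambda^*};
   only their values on paths of nonzero degree matter. *)
Section KP.
Variables (k : nat) (L : kgraph k) (R : comPzRingType) (A : lmodType R)
          (mul : nalg_mul A).

Definition is_KP_family (p : kV L -> A) (s st : kP L -> A) : Prop :=
  (forall v, mul (p v) (p v) = p v) /\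
  (forall v w, v != w -> mul (p v) (p w) = 0) /\
  (forall l m, kd l != dzero k -> kd m != dzero k -> ks l = kr m ->
     mul (s l) (s m) = s (kcomp l m) /\
     mul (st m) (st l) = st (kcomp l m)) /\
  (forall l, kd l != dzero k ->
     [/\ mul (p (kr l)) (s l) = s l, mul (s l) (p (ks l)) = s l,
         mul (p (ks l)) (st l) = st l & mul (st l) (p (kr l)) = st l]) /\
  (forall l m, kd l != dzero k -> kd m != dzero k -> kd l = kd m ->
     mul (st l) (s m) = if l == m then p (ks l) else 0) /\
  (* (KP4): the sum over the finite set v Lambda^n, given by any
     duplicate-free enumeration of it *)
  (forall v (n : deg_t k), n != dzero k ->
     forall e : seq (kP L), uniq e ->
       (forall l, (l \in e) = (kr l == v) && (kd l == n)) ->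
       p v = \sum_(l <- e) mul (s l) (st l)).

(* convention: s_v = s_{v^*} = p_v for vertices (degree-0 paths) *)
Definition Sfun (p : kV L -> A) (s : kP L -> A) (l : kP L) : A :=
  if kd l == dzero k then p (kr l) else s l.
End KP.

Definition is_nalg_hom (R : comPzRingType) (A B : lmodType R)
  (mA : nalg_mul A) (mB : nalg_mul B) (f : A -> B) : Prop :=
  (forall (r : R) x y, f (r *: x + y) = r *: f x + f y) /\
  (forall x y, f (mA x y) = mB (f x) (f y)).

Definition is_KP_algebra k (L : kgraph k) (R : comPzRingType) (A : lmodType R)
  (mul : nalg_mul A) (p : kV L -> A) (s st : kP L -> A) : Prop :=
  is_KP_family mul p s st /\
  forall (B : lmodType R) (mB : nalg_mul B) (q : kV L -> B) (t tt : kP L -> B),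
    is_KP_family mB q t tt ->
    (exists f : A -> B, is_nalg_hom mul mB f /\
       (forall v, f (p v) = q v) /\
       (forall l, kd l != dzero k -> f (s l) = t l /\ f (st l) = tt l)) /\
    (forall f g : A -> B,
       is_nalg_hom mul mB f -> is_nalg_hom mul mB g ->
       (forall v, f (p v) = q v) ->
       (forall l, kd l != dzero k -> f (s l) = t l /\ f (st l) = tt l) ->
       (forall v, g (p v) = q v) ->
       (forall l, kd l != dzero k -> g (s l) = t l /\ g (st l) = tt l) ->
       forall x, f x = g x).

(* On functions of pairs [(x, g)], with [x]
   an infinite path and [g] in [Z^k], the operators
     p_v f (x, g)  = [r(x) = v] f (x, g),
     s_l f (x, g)  = [x(0, d(l)) = l] f (shift_{d(l)} x, g - d(l)),
     s_l* f (x, g) = [r(x) = s(l)] f (l x, g + d(l))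
   form a Kumjian-Pask family, so the universal property maps KP_R(L) into
   this operator algebra.  Apply the image of a relation
   [sum c_(a,b) s_a s_b*] to the indicator of [{x | x(0, m) = b0} * {0}] and
   evaluate at [(a0 y, d(a0) - m)], where [y] is an infinite path from [s(a0)]
   (no sources).  A term [(a, b)] survives only if [a] is a prefix of [a0 y]
   and the [Z^k] coordinate forces [d(a) = d(a0)], whence [a = a0], and then
   [b = b0]; so only [c_(a0,b0)] remains. *)
From HB Require Import structures.
From mathcomp Require Import all_boot all_order all_algebra.
From mathcomp Require Import boolp.
Set Implicit Arguments. Unset Strict Implicit. Unset Printing Implicit Defensive.
Import GRing.Theory.
Local Open Scope ring_scope.

Section Degrees.
Variable k : nat.
Implicit Types a b c : deg_t k.

Lemma daddC a b : dadd a b = dadd b a.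
Proof. by apply/ffunP=> i; rewrite !ffunE addnC. Qed.

Lemma daddA a b c : dadd a (dadd b c) = dadd (dadd a b) c.
Proof. by apply/ffunP=> i; rewrite !ffunE addnA. Qed.

Lemma dadd0l a : dadd (dzero k) a = a.
Proof. by apply/ffunP=> i; rewrite !ffunE add0n. Qed.

Lemma daddI a : injective (dadd a).
Proof. by move=> b c /ffunP eq_bc; apply/ffunP=> i; have := eq_bc i; rewrite !ffunE => /addnI. Qed.

Definition zdeg a : {ffun 'I_k -> int} := [ffun i => (a i)%:Z].

Lemma zdegD a b : zdeg (dadd a b) = zdeg a + zdeg b.
Proof. by apply/ffunP=> i; rewrite !ffunE. Qed.

Lemma zdeg0 : zdeg (dzero k) = 0.
Proof. by apply/ffunP=> i; rewrite !ffunE. Qed.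

Lemma zdeg_inj : injective zdeg.
Proof. by move=> a b /ffunP eq_ab; apply/ffunP=> i; have := eq_ab i; rewrite !ffunE => -[]. Qed.
End Degrees.

Lemma sum_seq_delta (V : nmodType) (I : eqType) (e : seq I) (i : I) (F : I -> V) :
  uniq e -> \sum_(j <- e) (if i == j then F j else 0) = if i \in e then F i else 0.
Proof.
elim: e => [|j e IHe] /=; first by rewrite big_nil.
case/andP=> j_notin_e e_uniq; rewrite big_cons in_cons IHe //.
by case: (i =P j) => [->|_] /=; rewrite ?add0r // (negPf j_notin_e) addr0.
Qed.

Section Factorisation.
Variables (k : nat) (L : kgraph k).
Notation P := (kP L).
Implicit Types (a b c n : deg_t k) (l mu nu : P).

Definition is_factorisation l a b (q : P * P) : bool :=
  [&& kd q.1 == a, kd q.2 == b, ks q.1 == kr q.2 & l == kcomp q.1 q.2].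

(* The value [(l, l)] when [kd l <> a + b] is never used. *)
Definition factor l a b : P * P :=
  if pselect (exists q, is_factorisation l a b q) is left q_ex then xchoose q_ex
  else (l, l).

Lemma factorP l a b : kd l = dadd a b ->
  [/\ kd (factor l a b).1 = a, kd (factor l a b).2 = b,
      ks (factor l a b).1 = kr (factor l a b).2
    & l = kcomp (factor l a b).1 (factor l a b).2].
Proof.
move=> dl; rewrite /factor; case: pselect => [q_ex|]; last first.
  have [mu [nu [[dmu dnu smu ->] _]]] := kfactor dl.
  by case; exists (mu, nu); rewrite /is_factorisation /= dmu dnu smu !eqxx.
by have /and4P[/eqP-> /eqP-> /eqP-> /eqP<-] := xchooseP q_ex.
Qed.

Lemma factor_unique l a b mu nu : kd mu = a -> kd nu = b -> ks mu = kr nu ->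
  l = kcomp mu nu -> factor l a b = (mu, nu).
Proof.
move=> dmu dnu smu def_l.
have dl : kd l = dadd a b by rewrite def_l kd_comp // dmu dnu.
have [mu0 [nu0 [_ unique]]] := kfactor dl.
have [-> ->] := unique _ _ dmu dnu smu def_l.
have [dl1 dl2 sl1 def_l'] := factorP dl.
by have [<- <-] := unique _ _ dl1 dl2 sl1 def_l'; case: (factor l a b).
Qed.

Lemma deg0_kid l : kd l = dzero k -> l = kid (kr l).
Proof.
move=> dl.
have: factor l (dzero k) (dzero k) = (kid (kr l), l).
  by apply: factor_unique; rewrite ?kd_id ?ks_id ?kcomp_idl.
have ->: factor l (dzero k) (dzero k) = (l, kid (ks l)).
  by apply: factor_unique; rewrite ?kd_id ?kr_id ?kcomp_idr.
by case.
Qed.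

Lemma kid_inj : injective (@kid k L).
Proof. by move=> v w eq_vw; rewrite -(kr_id v) eq_vw kr_id. Qed.

Lemma factorA l a b c : kd l = dadd a (dadd b c) ->
  let q := factor l a (dadd b c) in let q' := factor q.2 b c in
  factor l (dadd a b) c = (kcomp q.1 q'.1, q'.2) /\ factor (kcomp q.1 q'.1) a b = (q.1, q'.1).
Proof.
move=> dl /=; have := factorP dl.
case: (factor l a (dadd b c)) => l1 l2 /= [dl1 dl2 sl1 def_l].
have := factorP dl2; case: (factor l2 b c) => m1 m2 /= [dm1 dm2 sm1 def_l2].
have sl1' : ks l1 = kr m1 by rewrite sl1 def_l2 kr_comp.
split; apply: factor_unique => //.
- by rewrite kd_comp // dl1 dm1.
- by rewrite ks_comp.
- by rewrite kcompA // -def_l2.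
Qed.

Lemma factor_prefix_prefix l a b c : kd l = dadd (dadd a b) c ->
  (factor (factor l (dadd a b) c).1 a b).1 = (factor l a (dadd b c)).1.
Proof.
move=> dl; have := factorP dl.
case: (factor l (dadd a b) c) => l1 l2 /= [dl1 dl2 sl1 def_l].
have := factorP dl1; case: (factor l1 a b) => m1 m2 /= [dm1 dm2 sm1 def_l1].
have sm2 : ks m2 = kr l2 by rewrite -sl1 def_l1 ks_comp.
suff -> : factor l a (dadd b c) = (m1, kcomp m2 l2) by [].
apply: factor_unique => //.
- by rewrite kd_comp // dm2 dl2.
- by rewrite kr_comp.
- by rewrite def_l def_l1 kcompA.
Qed.

Lemma factor_comp l mu a b : ks l = kr mu -> kd l = dadd a b ->
  factor (kcomp l mu) a (dadd b (kd mu)) = ((factor l a b).1, kcomp (factor l a b).2 mu).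
Proof.
move=> sl dl; have := factorP dl.
case: (factor l a b) => l1 l2 /= [dl1 dl2 sl1 def_l].
have sl2 : ks l2 = kr mu by rewrite -sl def_l ks_comp.
apply: factor_unique => //.
- by rewrite kd_comp // dl2.
- by rewrite kr_comp.
- by rewrite def_l kcompA.
Qed.
End Factorisation.

Section InfinitePaths.
Variables (k : nat) (L : kgraph k).
Notation P := (kP L).
Implicit Types (a b n : deg_t k) (l mu : P).

(* An infinite path is a degree-preserving functor from the k-graph of N^k,
   determined by its values x(0, n), written here [x n]. *)
Definition coherent (x : deg_t k -> P) :=
  (forall n, kd (x n) = n) /\ (forall a b, (factor (x (dadd a b)) a b).1 = x a).

Record ipath := IPath { ipath_fun :> deg_t k -> P; ipath_coherent : coherent ipath_fun }.
Implicit Types x y : ipath.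

Lemma ipath_ext x y : x =1 y -> x = y.
Proof.
case: x y => [f f_coh] [g g_coh] /funext /= eq_fg; subst g.
by congr IPath; apply: Prop_irrelevance.
Qed.

Lemma ipath_deg x n : kd (x n) = n.
Proof. by case: x => f []. Qed.

Lemma ipath_prefix x a b : (factor (x (dadd a b)) a b).1 = x a.
Proof. by case: x => f []. Qed.

Definition ipshift_fun a x (n : deg_t k) : P := (factor (x (dadd a n)) a n).2.

Lemma ipshift_coherent a x : coherent (ipshift_fun a x).
Proof.
split=> [n|n n']; first by have [] := factorP (ipath_deg x (dadd a n)).
have [factor_an factor_prefix] := factorA (ipath_deg x (dadd a (dadd n n'))).
rewrite /ipshift_fun; have := ipath_prefix x (dadd a n) n'.
by rewrite -daddA factor_an /= => <-; rewrite factor_prefix.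
Qed.

Definition ipshift a x : ipath := IPath (ipshift_coherent a x).

Lemma ipshiftE a x n : ipshift a x n = (factor (x (dadd a n)) a n).2.
Proof. by []. Qed.

Lemma ipath_split x a b :
  x (dadd a b) = kcomp (x a) (ipshift a x b) /\ ks (x a) = kr (ipshift a x b).
Proof. by have [_ _] := factorP (ipath_deg x (dadd a b)); rewrite ipath_prefix. Qed.

Definition ipr x := kr (x (dzero k)).

Lemma kr_ipath x n : kr (x n) = ipr x.
Proof.
have [def_x s_x0] := ipath_split x (dzero k) n.
by rewrite -[n in x n]dadd0l def_x kr_comp.
Qed.

Lemma ipath0 x : x (dzero k) = kid (ipr x).
Proof. exact: deg0_kid (ipath_deg x _). Qed.

Lemma ipr_shift a x : ipr (ipshift a x) = ks (x a).
Proof. by have [_ ->] := ipath_split x a (dzero k). Qed.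

Lemma ipshift_shift a b x : ipshift b (ipshift a x) = ipshift (dadd a b) x.
Proof.
apply: ipath_ext => n; rewrite !ipshiftE.
have [factor_ab _] := factorA (ipath_deg x (dadd a (dadd b n))).
by rewrite -daddA factor_ab.
Qed.

Lemma ipshift0 x : ipshift (dzero k) x = x.
Proof.
apply: ipath_ext => n; rewrite ipshiftE dadd0l.
suff -> : factor (x n) (dzero k) n = (kid (kr (x n)), x n) by [].
by apply: factor_unique; rewrite ?kd_id ?ipath_deg ?ks_id ?kcomp_idl.
Qed.

Lemma ipath_compE x l mu : ks l = kr mu ->
  (x (dadd (kd l) (kd mu)) == kcomp l mu) = (x (kd l) == l) && (ipshift (kd l) x (kd mu) == mu).
Proof.
move=> sl; have [def_x _] := ipath_split x (kd l) (kd mu).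
apply/eqP/andP => [x_lmu|[/eqP xl /eqP xmu]]; last by rewrite def_x xl xmu.
have : factor (x (dadd (kd l) (kd mu))) (kd l) (kd mu) = (l, mu) by apply: factor_unique.
by rewrite ipshiftE -(ipath_prefix x (kd l) (kd mu)) => ->.
Qed.

Definition ipcat_fun l y (n : deg_t k) : P := (factor (kcomp l (y n)) n (kd l)).1.

Lemma kd_comp_ipath l y n : ks l = ipr y -> kd (kcomp l (y n)) = dadd n (kd l).
Proof. by move=> sl; rewrite kd_comp ?kr_ipath // ipath_deg daddC. Qed.

Lemma ipcat_coherent l y : ks l = ipr y -> coherent (ipcat_fun l y).
Proof.
move=> sl; split=> [n|n n']; first by have [] := factorP (kd_comp_ipath n sl).
rewrite /ipcat_fun factor_prefix_prefix ?kd_comp_ipath //.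
have [def_y sy] := ipath_split y n n'.
rewrite def_y -kcompA //; last by rewrite kr_ipath.
have sly : ks (kcomp l (y n)) = kr (ipshift n y n') by rewrite ks_comp // kr_ipath.
have := factor_comp sly (kd_comp_ipath n sl).
by rewrite ipath_deg (daddC (kd l) n') => ->.
Qed.

(* The junk value [y] when [s(l) <> r(y)] is never used. *)
Definition ipcat l y : ipath :=
  if ks l =P ipr y is ReflectT sl then IPath (ipcat_coherent sl) else y.

Lemma ipcatE l y n : ks l = ipr y -> ipcat l y n = ipcat_fun l y n.
Proof. by rewrite /ipcat; case: (ks l =P ipr y). Qed.

Lemma ipcat_prefix l y : ks l = ipr y -> ipcat l y (kd l) = l.
Proof.
move=> sl; rewrite ipcatE // /ipcat_fun.
suff -> : factor (kcomp l (y (kd l))) (kd l) (kd l) = (l, y (kd l)) by [].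
by apply: factor_unique; rewrite ?ipath_deg ?kr_ipath.
Qed.

Lemma ipr_cat l y : ks l = ipr y -> ipr (ipcat l y) = kr l.
Proof.
move=> sl; rewrite /ipr ipcatE // /ipcat_fun.
have [_ _ sl1 def_l] := factorP (kd_comp_ipath (dzero k) sl).
by move/(congr1 (@kr k L)): def_l; rewrite !kr_comp ?kr_ipath // => ->.
Qed.

Lemma ipshift_cat l y : ks l = ipr y -> ipshift (kd l) (ipcat l y) = y.
Proof.
move=> sl; apply: ipath_ext => n; rewrite ipshiftE ipcatE // /ipcat_fun.
have [def_y sy] := ipath_split y n (kd l).
have sly : ks (kcomp l (y n)) = kr (ipshift n y (kd l)) by rewrite ks_comp // kr_ipath.
rewrite (daddC (kd l) n) def_y -kcompA //; last by rewrite kr_ipath.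
rewrite (@factor_unique _ _ _ _ _ (kcomp l (y n)) _ _ (ipath_deg _ _) sly) //=; last first.
  by rewrite kd_comp_ipath.
suff -> : factor (kcomp l (y n)) (kd l) n = (l, y n) by [].
by apply: factor_unique; rewrite ?ipath_deg ?kr_ipath.
Qed.

Lemma ipcat_shift x a : ipcat (x a) (ipshift a x) = x.
Proof.
have sx : ks (x a) = ipr (ipshift a x) by rewrite ipr_shift.
apply: ipath_ext => n; rewrite ipcatE // /ipcat_fun.
have [def_x _] := ipath_split x a n.
by rewrite -def_x ipath_deg daddC ipath_prefix.
Qed.

Lemma ipcat_comp l mu y : ks l = kr mu -> ks mu = ipr y ->
  ipcat l (ipcat mu y) = ipcat (kcomp l mu) y.
Proof.
move=> sl smu; set x := ipcat l (ipcat mu y).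
have sl' : ks l = ipr (ipcat mu y) by rewrite ipr_cat.
have x_lmu : x (kd (kcomp l mu)) = kcomp l mu.
  rewrite kd_comp //; apply/eqP; rewrite ipath_compE //.
  by rewrite /x ipcat_prefix // ipshift_cat // ipcat_prefix // !eqxx.
have x_shift : ipshift (kd (kcomp l mu)) x = y.
  by rewrite kd_comp // -ipshift_shift /x ipshift_cat // ipshift_cat.
by rewrite -[LHS](ipcat_shift x (kd (kcomp l mu))) x_lmu x_shift.
Qed.

Lemma ipcat_kid y : ipcat (kid (ipr y)) y = y.
Proof. by have := ipshift_cat (ks_id (ipr y)); rewrite kd_id ipshift0. Qed.
End InfinitePaths.

(* Without sources every vertex [v] starts a path [diag_path N] of degree
   [(N, ..., N)] for every [N], each extending the previous one; the infinite
   path at [v] reads off the prefixes of these. *)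
Section InfinitePathExistence.
Variables (k : nat) (L : kgraph k).
Hypothesis no_src : no_sources L.
Notation P := (kP L).
Implicit Types (a b n : deg_t k).

Definition diag (N : nat) : deg_t k := [ffun _ => N].

Lemma diag_edge_ex w : exists l : P, (kr l == w) && (kd l == diag 1).
Proof. by have [l [rl dl]] := no_src w (diag 1); exists l; rewrite rl dl !eqxx. Qed.

Definition diag_edge w : P := xchoose (diag_edge_ex w).

Lemma diag_edgeP w : kr (diag_edge w) = w /\ kd (diag_edge w) = diag 1.
Proof. by have /andP[/eqP -> /eqP ->] := xchooseP (diag_edge_ex w). Qed.

Variable v : kV L.

Fixpoint diag_path (N : nat) : P :=
  if N is N'.+1 then kcomp (diag_path N') (diag_edge (ks (diag_path N'))) else kid v.

Lemma diag_pathP N : kd (diag_path N) = diag N /\ kr (diag_path N) = v.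
Proof.
elim: N => [|N [dN rN]] /=.
  by rewrite kd_id kr_id; split=> //; apply/ffunP=> i; rewrite !ffunE.
have [re de] := diag_edgeP (ks (diag_path N)).
rewrite kd_comp ?re // kr_comp ?re //; split=> //.
by apply/ffunP=> i; rewrite !ffunE dN de !ffunE addn1.
Qed.

Lemma diag_path_extend N j :
  exists l : P, ks (diag_path N) = kr l /\ diag_path (N + j) = kcomp (diag_path N) l.
Proof.
elim: j => [|j [l [sN def_Nj]]].
  by exists (kid (ks (diag_path N))); rewrite addn0 kr_id kcomp_idr.
have [re _] := diag_edgeP (ks (diag_path (N + j))).
have sl : ks l = kr (diag_edge (ks (diag_path (N + j)))) by rewrite re def_Nj ks_comp.
exists (kcomp l (diag_edge (ks (diag_path (N + j))))); split; first by rewrite kr_comp.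
by rewrite addnS /= -kcompA // -def_Nj.
Qed.

Definition diag_gap N n : deg_t k := [ffun i => (N - n i)%N].

Lemma dadd_gap N n : (forall i, n i <= N)%N -> dadd n (diag_gap N n) = diag N.
Proof. by move=> le_nN; apply/ffunP=> i; rewrite !ffunE subnKC. Qed.

Lemma kd_diag_path N n : (forall i, n i <= N)%N -> kd (diag_path N) = dadd n (diag_gap N n).
Proof. by move=> le_nN; rewrite dadd_gap // (proj1 (diag_pathP N)). Qed.

Lemma diag_prefix_indep N N' n : (forall i, n i <= N)%N -> (forall i, n i <= N')%N ->
  (factor (diag_path N) n (diag_gap N n)).1 = (factor (diag_path N') n (diag_gap N' n)).1.
Proof.
wlog le_NN' : N N' / (N <= N')%N.
  by move=> W le_nN le_nN'; case: (leqP N N') => [|/ltnW] le; [|symmetry]; apply: W.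
move=> le_nN le_nN'.
have [l [sN def_N']] := diag_path_extend N (N' - N).
rewrite subnKC // in def_N'.
have gapN' : diag_gap N' n = dadd (diag_gap N n) (kd l).
  apply: (@daddI _ n); rewrite dadd_gap // daddA -kd_diag_path // -kd_comp // -def_N'.
  by rewrite (proj1 (diag_pathP N')).
by rewrite def_N' gapN' factor_comp // (kd_diag_path le_nN).
Qed.

Definition degmax n : nat := \max_(i < k) n i.

Lemma degmax_ge n i : (n i <= degmax n)%N.
Proof. exact: (leq_bigmax i). Qed.

Definition diag_ipath_fun n : P := (factor (diag_path (degmax n)) n (diag_gap (degmax n) n)).1.

Lemma diag_ipath_coherent : coherent diag_ipath_fun.
Proof.
split=> [n|n n'].
  by have [] := factorP (kd_diag_path (degmax_ge n)).
rewrite /diag_ipath_fun; set M := degmax (dadd n n').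
have le_nM i : (n i <= M)%N.
  by apply: leq_trans (degmax_ge (dadd n n') i); rewrite ffunE leq_addr.
rewrite factor_prefix_prefix; last exact: kd_diag_path (degmax_ge _).
have -> : dadd n' (diag_gap M (dadd n n')) = diag_gap M n.
  by apply: (@daddI _ n); rewrite daddA !dadd_gap //; apply: degmax_ge.
by apply: diag_prefix_indep => //; apply: degmax_ge.
Qed.

Lemma ipr_diag_ipath : ipr (IPath diag_ipath_coherent) = v.
Proof.
rewrite /ipr /= /diag_ipath_fun.
have [_ _ sd def_d] := factorP (kd_diag_path (degmax_ge (dzero k))).
by move/(congr1 (@kr k L)): def_d; rewrite kr_comp // (proj2 (diag_pathP _)) => ->.
Qed.
End InfinitePathExistence.

Lemma ipath_exists k (L : kgraph k) : no_sources L -> forall v, exists y : ipath L, ipr y = v.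
Proof.
by move=> no_src v; exists (IPath (diag_ipath_coherent no_src v)); apply: ipr_diag_ipath.
Qed.

Section LinearOperators.
Variables (R : comPzRingType) (X : Type).
Notation fn := (X -> R).

Definition linear_op (F : fn -> fn) :=
  forall (r : R) (f g : fn), F (fun z => r * f z + g z) = fun z => r * F f z + F g z.

Record linop := LinOp { linop_fun :> fn -> fn; linopP : linear_op linop_fun }.
Implicit Types F G H : linop.

Lemma linop_ext F G : (forall f z, F f z = G f z) -> F = G.
Proof.
case: F G => [F F_lin] [G G_lin] /= eq_FG.
have eq_FG' : F = G by apply: funext => f; apply: funext; apply: eq_FG.
by subst G; congr LinOp; apply: Prop_irrelevance.
Qed.

HB.instance Definition _ := gen_eqMixin linop.
HB.instance Definition _ := gen_choiceMixin linop.

Lemma linop0 F : F (fun _ => 0) = fun _ => 0.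
Proof.
have zero_comb : (fun _ : X => 0 : R) = fun _ => -1 * 0 + 0.
  by apply: funext => z; rewrite mulr0 addr0.
by rewrite [in LHS]zero_comb linopP; apply: funext => z; rewrite mulN1r addNr.
Qed.

Lemma linopD F f g : F (fun z => f z + g z) = fun z => F f z + F g z.
Proof.
have := linopP F 1 f g.
by under eq_fun do rewrite mul1r; under [in RHS]eq_fun do rewrite mul1r.
Qed.

Lemma linopZ F r f : F (fun z => r * f z) = fun z => r * F f z.
Proof.
have := linopP F r f (fun _ => 0); rewrite linop0.
by under eq_fun do rewrite addr0; under [in RHS]eq_fun do rewrite addr0.
Qed.

Fact linear_op0 : linear_op (fun (_ : fn) (_ : X) => 0 : R).
Proof. by move=> r f g; apply: funext => z; rewrite mulr0 addr0. Qed.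

Fact linear_opD F G : linear_op (fun f z => F f z + G f z).
Proof. by move=> r f g; apply: funext => z; rewrite !linopP mulrDr addrACA. Qed.

Fact linear_opN F : linear_op (fun f z => - F f z).
Proof. by move=> r f g; apply: funext => z; rewrite linopP opprD mulrN. Qed.

Fact linear_opZ a F : linear_op (fun f z => a * F f z).
Proof. by move=> r f g; apply: funext => z; rewrite linopP mulrDr !mulrA (mulrC a r). Qed.

Fact linear_op_comp F G : linear_op (fun f => F (G f)).
Proof. by move=> r f g; rewrite !linopP. Qed.

Definition linop_zero := LinOp linear_op0.
Definition linop_add F G := LinOp (linear_opD F G).
Definition linop_opp F := LinOp (linear_opN F).
Definition linop_scale a F := LinOp (linear_opZ a F).
Definition linop_mul F G := LinOp (linear_op_comp F G).

Fact linop_addA : associative linop_add.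
Proof. by move=> F G H; apply: linop_ext => f z /=; rewrite addrA. Qed.
Fact linop_addC : commutative linop_add.
Proof. by move=> F G; apply: linop_ext => f z /=; rewrite addrC. Qed.
Fact linop_add0 : left_id linop_zero linop_add.
Proof. by move=> F; apply: linop_ext => f z /=; rewrite add0r. Qed.
Fact linop_addN : left_inverse linop_zero linop_opp linop_add.
Proof. by move=> F; apply: linop_ext => f z /=; rewrite addNr. Qed.

HB.instance Definition _ := GRing.isZmodule.Build linop linop_addA linop_addC linop_add0 linop_addN.

Fact linop_scaleA a b F : linop_scale a (linop_scale b F) = linop_scale (a * b) F.
Proof. by apply: linop_ext => f z /=; rewrite mulrA. Qed.
Fact linop_scale1 : left_id 1 linop_scale.
Proof. by move=> F; apply: linop_ext => f z /=; rewrite mul1r. Qed.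
Fact linop_scaleDr : right_distributive linop_scale +%R.
Proof. by move=> a F G; apply: linop_ext => f z /=; rewrite mulrDr. Qed.
Fact linop_scaleDl F : {morph linop_scale^~ F : a b / a + b}.
Proof. by move=> a b; apply: linop_ext => f z /=; rewrite mulrDl. Qed.

HB.instance Definition _ := GRing.Zmodule_isLmodule.Build R linop
  linop_scaleA linop_scale1 linop_scaleDr linop_scaleDl.

Fact linop_mulA : forall F G H, linop_mul F (linop_mul G H) = linop_mul (linop_mul F G) H.
Proof. by move=> F G H; apply: linop_ext. Qed.
Fact linop_mulDl : forall F G H, linop_mul (F + G) H = linop_mul F H + linop_mul G H.
Proof. by move=> F G H; apply: linop_ext. Qed.
Fact linop_mulDr : forall F G H, linop_mul F (G + H) = linop_mul F G + linop_mul F H.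
Proof. by move=> F G H; apply: linop_ext => f z /=; rewrite linopD. Qed.
Fact linop_mulZl : forall r F G, linop_mul (r *: F) G = r *: linop_mul F G.
Proof. by move=> r F G; apply: linop_ext. Qed.
Fact linop_mulZr : forall r F G, linop_mul F (r *: G) = r *: linop_mul F G.
Proof. by move=> r F G; apply: linop_ext => f z /=; rewrite linopZ. Qed.

Definition linop_algebra : nalg_mul linop :=
  NAlgMul linop_mulA linop_mulDl linop_mulDr linop_mulZl linop_mulZr.

Lemma linop_sumE (I : Type) (r : seq I) (F : I -> linop) f z :
  (\sum_(i <- r) F i) f z = \sum_(i <- r) F i f z.
Proof. by elim: r => [|i r IHr]; rewrite ?big_nil // !big_cons -IHr. Qed.
End LinearOperators.

Section InfinitePathRepresentation.
Variables (k : nat) (L : kgraph k) (R : comPzRingType).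
Notation P := (kP L).
Notation point := (ipath L * {ffun 'I_k -> int})%type.
Notation fn := (point -> R).
Notation op := (linop R point).

Definition rep_p_fun (v : kV L) (f : fn) : fn :=
  fun z => if ipr z.1 == v then f z else 0.
Definition rep_s_fun (l : P) (f : fn) : fn :=
  fun z => if z.1 (kd l) == l then f (ipshift (kd l) z.1, z.2 - zdeg (kd l)) else 0.
Definition rep_st_fun (l : P) (f : fn) : fn :=
  fun z => if ipr z.1 == ks l then f (ipcat l z.1, z.2 + zdeg (kd l)) else 0.

Fact linear_rep_p v : linear_op (rep_p_fun v).
Proof.
by move=> r f g; apply: funext => z; rewrite /rep_p_fun; case: ifP; rewrite ?mulr0 ?addr0.
Qed.
Fact linear_rep_s l : linear_op (rep_s_fun l).
Proof.
by move=> r f g; apply: funext => z; rewrite /rep_s_fun; case: ifP; rewrite ?mulr0 ?addr0.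
Qed.
Fact linear_rep_st l : linear_op (rep_st_fun l).
Proof.
by move=> r f g; apply: funext => z; rewrite /rep_st_fun; case: ifP; rewrite ?mulr0 ?addr0.
Qed.

Definition rep_p v : op := LinOp (linear_rep_p v).
Definition rep_s l : op := LinOp (linear_rep_s l).
Definition rep_st l : op := LinOp (linear_rep_st l).

Notation mul := (linop_algebra R point).

Lemma rep_KP_family : is_KP_family mul rep_p rep_s rep_st.
Proof.
split; [|split; [|split; [|split; [|split]]]].
- by move=> v; apply: linop_ext => f z /=; rewrite /rep_p_fun; case: (ipr z.1 == v).
- move=> v w neq_vw; apply: linop_ext => f z /=; rewrite /rep_p_fun.
  by case: (ipr z.1 =P v) => // ->; rewrite (negPf neq_vw).
- move=> l mu _ _ sl; split; apply: linop_ext => f z /=.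
    rewrite /rep_s_fun kd_comp // ipath_compE // ipshift_shift zdegD opprD addrA.
    by case: (z.1 (kd l) == l).
  rewrite /rep_st_fun ks_comp //; case: (ipr z.1 =P ks mu) => // z_mu.
  by rewrite /= ipr_cat // sl eqxx ipcat_comp // kd_comp // zdegD (addrC (zdeg (kd l))) addrA.
- move=> l _; split; apply: linop_ext => f z /=; rewrite /rep_p_fun /rep_s_fun /rep_st_fun.
  + case: (z.1 (kd l) =P l) => [<-|]; first by rewrite kr_ipath eqxx.
    by case: (ipr z.1 == kr l).
  + by case: (z.1 (kd l) =P l) => // z_l; rewrite /= ipr_shift z_l eqxx.
  + by case: (ipr z.1 == ks l).
  + by case: (ipr z.1 =P ks l) => // z_l; rewrite /= ipr_cat // eqxx.
- move=> l mu _ _ d_lmu; apply: linop_ext => f z.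
  rewrite /= /rep_s_fun /rep_st_fun -d_lmu.
  case: (l =P mu) => [<-|/eqP neq_lmu]; rewrite /= /rep_p_fun; case: (ipr z.1 =P ks l) => //= z_l.
    by rewrite ipcat_prefix // eqxx ipshift_cat // addrK; case: z z_l.
  by rewrite ipcat_prefix // (negPf neq_lmu).
- move=> v n _ e e_uniq e_vn; apply: linop_ext => f z; rewrite linop_sumE /=.
  transitivity (\sum_(l <- e) (if z.1 n == l then f z else 0)).
    rewrite sum_seq_delta // e_vn ipath_deg eqxx andbT kr_ipath /rep_p_fun.
    by case: (ipr z.1 == v).
  apply: eq_big_seq => l; rewrite e_vn => /andP[_ /eqP dl].
  rewrite /rep_s_fun /rep_st_fun dl; case: (z.1 n =P l) => //= z_l.
  by rewrite ipr_shift z_l eqxx -z_l ipcat_shift subrK; case: z z_l.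
Qed.

Lemma rep_s_deg0 l : kd l = dzero k -> rep_s l = rep_p (kr l).
Proof.
move=> dl; apply: linop_ext => f z /=.
rewrite /rep_s_fun /rep_p_fun dl ipath0 ipshift0 zdeg0 subr0 {1}(deg0_kid dl).
by rewrite (inj_eq (@kid_inj k L)); case: z.
Qed.

Lemma rep_st_deg0 l : kd l = dzero k -> rep_st l = rep_p (kr l).
Proof.
move=> dl; apply: linop_ext => f z /=; rewrite /rep_st_fun /rep_p_fun dl zdeg0 addr0.
have sl : ks l = kr l by rewrite {1}(deg0_kid dl) ks_id.
rewrite sl; case: (ipr z.1 =P kr l) => // z_l.
by rewrite (deg0_kid dl) -z_l ipcat_kid; case: z z_l.
Qed.

Definition cylinder (b : P) : fn := fun z => if (z.1 (kd b) == b) && (z.2 == 0) then 1 else 0.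

Lemma rep_cylinder a b a0 b0 y :
  ks a = ks b -> kd b = kd b0 -> ks a0 = ks b0 -> ipr y = ks a0 ->
  mul (rep_s a) (rep_st b) (cylinder b0) (ipcat a0 y, zdeg (kd a0) - zdeg (kd b0)) =
  if (a0, b0) == (a, b) then 1 else 0.
Proof.
move=> sab db s_a0b0 y_a0; rewrite /= /rep_s_fun /rep_st_fun /cylinder /=.
have a0y : ks a0 = ipr y by [].
have b0y : ks b0 = ipr y by rewrite y_a0.
case: ((a0, b0) =P (a, b)) => [[<- <-]|neq_ab].
  rewrite ipcat_prefix // eqxx ipshift_cat // -b0y eqxx ipcat_prefix // eqxx.
  by rewrite addrAC subrK subrr eqxx.
case: (ipcat a0 y (kd a) =P a) => [a_pref|//].
case: (ipr _ =P ks b) => [b_r|//]; case: andP => [[/eqP b_pref /eqP]|//].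
rewrite db addrAC subrK => /eqP; rewrite subr_eq0 => /eqP/zdeg_inj d_a0a.
move: a_pref b_r b_pref; rewrite -d_a0a ipcat_prefix // => a0a.
rewrite ipshift_cat // -db => b_y; rewrite ipcat_prefix -?b_y // => b_b0.
by case: neq_ab; rewrite a0a b_b0.
Qed.
End InfinitePathRepresentation.

Section NonUnitalAlgebraHom.
Variables (R : comPzRingType) (A B : lmodType R) (mA : nalg_mul A) (mB : nalg_mul B).
Variable f : A -> B.
Hypothesis f_hom : is_nalg_hom mA mB f.

Lemma nalg_hom0 : f 0 = 0.
Proof.
have := (proj1 f_hom) 1 0 0; rewrite !scale1r addr0.
by move/(congr1 (fun t => t - f 0)); rewrite subrr addrK.
Qed.

Lemma nalg_hom_sumZ (I : Type) (r : seq I) (c : I -> R) (x : I -> A) :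
  f (\sum_(i <- r) c i *: x i) = \sum_(i <- r) c i *: f (x i).
Proof.
elim: r => [|i r IHr]; first by rewrite !big_nil nalg_hom0.
by rewrite !big_cons (proj1 f_hom) IHr.
Qed.
End NonUnitalAlgebraHom.

Theorem lemma4p1 (k : nat) (L : kgraph k) (R : comPzRingType)
  (A : lmodType R) (mul : nalg_mul A)
  (p : kV L -> A) (s st : kP L -> A) (m : deg_t k) :
  row_finite L -> no_sources L ->
  is_KP_algebra mul p s st ->
  forall (e : seq (kP L * kP L)) (c : kP L * kP L -> R),
    uniq e ->
    (forall ab, ab \in e -> ks ab.1 = ks ab.2 /\ kd ab.2 = m) ->
    \sum_(ab <- e) c ab *: mul (Sfun p s ab.1) (Sfun p st ab.2) = 0 ->
    forall ab, ab \in e -> c ab = 0.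
Proof.
move=> _ no_src [_ universal] e c e_uniq e_ab rel [a0 b0] ab0_e.
have [[F [F_hom [F_p F_s]]] _] := universal _ _ _ _ _ (rep_KP_family L R).
have F_Sfun_s a : F (Sfun p s a) = rep_s R a.
  rewrite /Sfun; case: eqP => [/rep_s_deg0 ->|/eqP /F_s[] //]; exact: F_p.
have F_Sfun_st b : F (Sfun p st b) = rep_st R b.
  rewrite /Sfun; case: eqP => [/rep_st_deg0 ->|/eqP /F_s[] //]; exact: F_p.
have [s_a0b0 d_b0] := e_ab _ ab0_e.
have [y y_a0] := ipath_exists no_src (ks a0).
pose z0 := (ipcat a0 y, zdeg (kd a0) - zdeg (kd b0)).
have := congr1 (fun G : linop R _ => G (cylinder R b0) z0) (congr1 F rel).
rewrite /= (nalg_hom_sumZ F_hom) (nalg_hom0 F_hom) linop_sumE.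
under eq_big_seq => ab ab_e.
  have [s_ab d_ab] := e_ab _ ab_e.
  rewrite /= (proj2 F_hom) F_Sfun_s F_Sfun_st rep_cylinder ?d_ab ?d_b0 //.
  rewrite -surjective_pairing (fun_if (fun t => c ab * t)) mulr1 mulr0.
  over.
by rewrite sum_seq_delta // ab0_e => ->.
Qed.
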